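(* Let $G$ be a bipartite graph without isolated vertices such that $\mathrm{Ind}(G)$ is pure. Then some pure order of $G$ has a cross if and only if every pure order of $G$ has a cross.
   Context: $\mathrm{Ind}(G)$ is the complex of independent sets of $G$. For a bipartite graph $G$ without isolated vertices with $\mathrm{Ind}(G)$ pure, a pure order of $G$ is a partition of the vertex set into independent sets $\{x_1,\ldots,x_n\}$ and $\{y_1,\ldots,y_n\}$ such that (1) $x_iy_i$ is an edge for all $1\le i\le n$, and (2) whenever $x_iy_j$ and $x_jy_k$ are edges with $i,j,k$ distinct, $x_iy_k$ is an edge. (Such orders exist exactly when $\mathrm{Ind}(G)$ is pure, by a theorem of Villarreal.) A pure order has a cross if there are $i\ne j$ with both $x_iy_j$ and $x_jy_i$ edges of $G$; otherwise it is cross-free. *)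

(* A simple graph is a symmetric irreflexive relation e on a finType T. *)
From mathcomp Require Import all_boot.
Set Implicit Arguments. Unset Strict Implicit. Unset Printing Implicit Defensive.

Section Graph.
Variables (T : finType) (e : rel T).

Definition independent (A : {set T}) : bool :=
  [forall u in A, forall v in A, ~~ e u v].

(* A is a maximal independent set (facet of Ind(G)). *)
Definition maximal_independent (A : {set T}) : bool :=
  independent A && [forall B : {set T}, (A \proper B) ==> ~~ independent B].

Definition Ind_pure : Prop :=
  forall A B : {set T}, maximal_independent A -> maximal_independent B -> #|A| = #|B|.

Definition bipartite : Prop :=
  exists A : {set T}, independent A /\ independent (~: A).

Definition no_isolated_vertices : Prop := forall v : T, exists u : T, e v u.

Definition pure_order (n : nat) (x y : 'I_n -> T) : Prop :=
  [/\ injective x, injective y,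
      (forall i j, x i != y j),
      (forall v, (exists i, v = x i) \/ (exists i, v = y i)) &
      independent [set x i | i in 'I_n] ] /\
  [/\ independent [set y i | i in 'I_n],
      (forall i, e (x i) (y i)) &
      (forall i j k, i != j -> j != k -> i != k ->
         e (x i) (y j) -> e (x j) (y k) -> e (x i) (y k))].

Definition has_cross (n : nat) (x y : 'I_n -> T) : Prop :=
  exists i j : 'I_n, i != j /\ e (x i) (y j) /\ e (x j) (y i).

End Graph.

(* In a pure Ind(G), every maximal independent set has n elements, so it contains
   exactly one end of each edge x_k y_k of a pure order.  A cross x_i y_j, x_j y_i therefore
   forces x_i and x_j to lie in the same maximal independent sets.  Conversely, in a
   cross-free pure order any two vertices are separated by a maximal independent set: for
   two indices c, d with no edge x_c y_d, take x_k for k in the up-set of c (closed under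
   the edges x_k y_l by transitivity) and y_k elsewhere.  Hence one crossed pure order
   makes every pure order crossed.  The existence of a pure order, needed for the other
   direction, comes from Hall's theorem: purity gives Hall's condition for the bipartition
   of G, and a perfect matching is automatically a pure order. *)

From mathcomp Require Import all_boot.
Set Implicit Arguments. Unset Strict Implicit. Unset Printing Implicit Defensive.

Section Hall.
Variable T : finType.
Implicit Types (r : rel T) (B S X : {set T}).

Definition nbhd r S : {set T} := [set v | [exists u in S, r u v]].

Lemma nbhdP r S v : reflect (exists2 u, u \in S & r u v) (v \in nbhd r S).
Proof.
rewrite inE; apply: (iffP existsP) => [[u /andP[]]|[u Su ruv]]; first by exists u.
by exists u; rewrite Su.
Qed.

Lemma nbhdU r S1 S2 : nbhd r (S1 :|: S2) = nbhd r S1 :|: nbhd r S2.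
Proof.
apply/setP=> v; rewrite in_setU; apply/nbhdP/orP => [[u]|].
  by rewrite inE => /orP[] Su ruv; [left | right]; apply/nbhdP; exists u.
by case=> /nbhdP[u Su ruv]; exists u; rewrite // inE Su ?orbT.
Qed.

Definition avoid r B : rel T := [rel u v | r u v && (v \notin B)].

Lemma nbhd_avoid r B S : nbhd (avoid r B) S = nbhd r S :\: B.
Proof.
apply/setP => v; rewrite in_setD andbC.
apply/nbhdP/andP => [[u Su /andP[ruv vB]]|[/nbhdP[u Su ruv] vB]].
  by split=> //; apply/nbhdP; exists u.
by exists u => //; rewrite /avoid /= ruv.
Qed.

Definition matching r X (f : T -> T) : Prop :=
  {in X &, injective f} /\ {in X, forall x, r x (f x)}.

Definition hall_condition r X : Prop :=
  forall S, S \subset X -> #|S| <= #|nbhd r S|.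

Lemma matching_glue r B S X f g :
  matching r S f -> {in S, forall x, f x \in B} -> matching (avoid r B) X g ->
  matching r (S :|: X) (fun x => if x \in S then f x else g x).
Proof.
move=> [f_inj rf] fB [g_inj rg].
have Xg x : x \in S :|: X -> x \notin S -> x \in X by rewrite inE => /orP[->|].
split=> [u v Du Dv|u Du]; last first.
  by case: ifPn => [/rf // | /(Xg u Du) /rg /andP[]].
case: ifPn => Su; case: ifPn => Sv.
- exact: f_inj.
- by move=> fg; have /andP[_] := rg v (Xg v Dv Sv); rewrite -fg fB.
- by move=> gf; have /andP[_] := rg u (Xg u Du Su); rewrite gf fB.
- exact: g_inj (Xg u Du Su) (Xg v Dv Sv).
Qed.

Lemma hall_conditionS r S X : S \subset X -> hall_condition r X -> hall_condition r S.
Proof. by move=> sSX hX S' sS'; apply/hX/(subset_trans sS'). Qed.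

Lemma hall_condition_tight r S X :
  S \subset X -> #|nbhd r S| <= #|S| -> hall_condition r X ->
  hall_condition (avoid r (nbhd r S)) (X :\: S).
Proof.
move=> sSX tightS hX S' sS'.
have disjSS' : S :&: S' = set0.
  apply/setP => v; rewrite !inE; apply/negP => /andP[Sv S'v].
  by move/subsetP: sS' => /(_ v S'v); rewrite inE Sv.
have := hX (S :|: S'); rewrite subUset sSX (subset_trans sS' (subsetDl X S)).
rewrite cardsU disjSS' cards0 subn0 nbhdU => /(_ isT).
rewrite -(cardsID (nbhd r S) (_ :|: _)) setUK setDUl setDv set0U nbhd_avoid.
by move/(leq_trans (leq_add tightS (leqnn _))); rewrite leq_add2l.
Qed.

Lemma hall_condition_surplus r X x0 y0 :
  x0 \in X ->
  (forall S, S \proper X -> S != set0 -> #|S| < #|nbhd r S|) ->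
  hall_condition (avoid r [set y0]) (X :\ x0).
Proof.
move=> Xx0 surplus S sS; rewrite nbhd_avoid.
have [-> | S_n0] := eqVneq S set0; first by rewrite cards0.
have := surplus S (sub_proper_trans sS (properD1 Xx0)) S_n0.
rewrite (cardsD1 y0 (nbhd r S)).
by case: (y0 \in _); rewrite ?add1n ?ltnS // => /ltnW.
Qed.

Theorem hall_marriage r X : hall_condition r X -> exists f, matching r X f.
Proof.
move: {2}#|X| (leqnn #|X|) => n; elim: n r X => [|n IH] r X leXn hX.
  move: leXn; rewrite leqn0 => /eqP/cards0_eq ->.
  by exists id; split=> x; rewrite inE.
have [-> | /set0Pn[x0 Xx0]] := eqVneq X set0.
  by exists id; split=> x; rewrite inE.
have [tight | surplus] := boolP
  [exists S : {set T}, [&& S \proper X, S != set0 & #|nbhd r S| <= #|S|]].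
- have /existsP[S /and3P[ltSX S_n0 tightS]] := tight.
  have sSX := proper_sub ltSX.
  have [f rf] : exists f, matching r S f.
    apply: IH (hall_conditionS sSX hX).
    by rewrite -ltnS (leq_trans (proper_card ltSX)).
  have [g rg] : exists g, matching (avoid r (nbhd r S)) (X :\: S) g.
    apply: IH (hall_condition_tight sSX tightS hX).
    rewrite (cardsDS sSX) leq_subLR (leq_trans leXn) //.
    by rewrite -add1n leq_add2r card_gt0.
  exists (fun x => if x \in S then f x else g x).
  have -> : X = S :|: (X :\: S).
    by apply/setP => v; rewrite !inE; case: (boolP (v \in S)) => // /(subsetP sSX).
  apply: matching_glue (rf) _ rg => x Sx.
  by apply/nbhdP; exists x; last exact: rf.2.
- have [y0 r_x0y0] : exists y0, r x0 y0.
    have := hX [set x0]; rewrite sub1set Xx0 cards1 card_gt0 => /(_ isT) /set0Pn[y0].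
    by case/nbhdP => u; rewrite inE => /eqP ->; exists y0.
  have [g rg] : exists g, matching (avoid r [set y0]) (X :\ x0) g.
    apply: IH; first by move: leXn; rewrite (cardsD1 x0 X) Xx0.
    apply: hall_condition_surplus => // S ltSX S_n0.
    by move: surplus; rewrite negb_exists => /forallP/(_ S); rewrite ltSX S_n0 ltnNge.
  exists (fun x => if x \in [set x0] then y0 else g x); rewrite -(setD1K Xx0).
  apply: matching_glue rg => [|x _]; last by rewrite set11.
  by split=> [u v | u]; rewrite !inE => /eqP-> // /eqP->.
Qed.

End Hall.

Section Independence.
Variables (T : finType) (e : rel T).
Implicit Types (A M S : {set T}).

Lemma independentP A :
  reflect (forall u v, u \in A -> v \in A -> ~~ e u v) (independent e A).
Proof.
apply: (iffP forall_inP) => [indA u v Au Av | indA u Au].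
  by move/forall_inP: (indA u Au); apply.
by apply/forall_inP => v; apply: indA.
Qed.

Lemma independentS A S : S \subset A -> independent e A -> independent e S.
Proof.
move=> /subsetP sSA /independentP indA.
by apply/independentP => u v Su Sv; apply: indA; apply: sSA.
Qed.

Lemma maximal_independent_indep M : maximal_independent e M -> independent e M.
Proof. by case/andP. Qed.

Lemma independent_extend S :
  independent e S -> exists2 M, maximal_independent e M & S \subset M.
Proof.
move=> indS.
have [M /andP[indM sSM] maxM] := arg_maxnP (fun A => #|A|)
  (P := fun A => independent e A && (S \subset A)) (introT andP (conj indS (subxx S))).
exists M => //; rewrite /maximal_independent indM.
apply/forall_inP => A ltMA; apply/negP => indA.
have := maxM A; rewrite indA (subset_trans sSM (proper_sub ltMA)) => /(_ isT).
by apply/negP; rewrite -ltnNge proper_card.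
Qed.

Lemma dominating_maximal_independent M :
  independent e M -> (forall v, v \notin M -> exists2 u, u \in M & e u v) ->
  maximal_independent e M.
Proof.
move=> indM dom; rewrite /maximal_independent indM.
apply/forall_inP => A /properP[sMA [v Av Mv]]; apply/negP => /independentP indA.
have [u Mu euv] := dom v Mv.
by move: (indA u v (subsetP sMA u Mu) Av); rewrite euv.
Qed.

Lemma independent_card_le (hpure : Ind_pure e) S M :
  maximal_independent e M -> independent e S -> #|S| <= #|M|.
Proof.
move=> maxM /independent_extend[M' maxM' sSM'].
by rewrite (hpure M M') // subset_leq_card.
Qed.

End Independence.

(* A pure order minus condition (2), which [pairing_transitive] recovers from purity. *)
Section Pairing.
Variables (T : finType) (e : rel T) (n : nat) (x y : 'I_n -> T).
Hypotheses (x_inj : injective x) (y_inj : injective y) (xy_neq : forall i j, x i != y j).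
Hypothesis xy_cover : forall v, (exists i, v = x i) \/ (exists i, v = y i).
Hypotheses (indX : independent e [set x i | i in 'I_n])
           (indY : independent e [set y i | i in 'I_n]).
Hypothesis xy_edge : forall i, e (x i) (y i).

Lemma maximal_independent_x_side : maximal_independent e [set x i | i in 'I_n].
Proof.
apply: dominating_maximal_independent => // v.
case: (xy_cover v) => [[i ->]|[i ->] _]; first by rewrite imset_f.
by exists (x i); rewrite ?imset_f.
Qed.

(* Counting: [M] has [n] elements and meets at most one vertex of each edge [x_k y_k],
   so a pair missed by [M] would leave room for at most [n - 1] of them. *)
Lemma maximal_independent_meets_pair (hpure : Ind_pure e) M k :
  maximal_independent e M -> (x k \in M) || (y k \in M).
Proof.
move=> maxM; apply/negPn/negP; rewrite negb_or => /andP[Mxk Myk].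
have /independentP indM := maximal_independent_indep maxM.
set X := [set x i | i in 'I_n].
have cardM : #|M| = n.
  by rewrite -(hpure _ _ maximal_independent_x_side maxM) card_imset ?card_ord.
pose I1 := [set i | x i \in M]; pose I2 := [set i | y i \in M].
have le_MX : #|M :&: X| <= #|I1|.
  apply: leq_trans (leq_imset_card x I1); apply/subset_leq_card/subsetP => v.
  by rewrite inE => /andP[Mv /imsetP[i _ vi]]; rewrite vi imset_f // inE -vi.
have le_MnX : #|M :\: X| <= #|I2|.
  apply: leq_trans (leq_imset_card y I2); apply/subset_leq_card/subsetP => v.
  rewrite inE => /andP[Xv Mv]; case: (xy_cover v) => [[i vi]|[i vi]].
    by rewrite vi imset_f in Xv.
  by rewrite vi imset_f // inE -vi.
have disjI : I1 :&: I2 = set0.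
  apply/setP => i; rewrite !inE; apply/negP => /andP[Mx My].
  by move: (indM _ _ Mx My); rewrite xy_edge.
have : #|I1 :|: I2| < n.
  rewrite -[n in _ < n]card_ord -cardsT; apply/proper_card/properP.
  by split; [exact: subsetT | exists k; rewrite !inE // negb_or Mxk Myk].
rewrite cardsU disjI cards0 subn0 ltnNge -[n in n <= _]cardM -(cardsID X M).
by rewrite leq_add.
Qed.

Lemma maximal_independent_pairE (hpure : Ind_pure e) M k :
  maximal_independent e M -> (y k \in M) = (x k \notin M).
Proof.
move=> maxM; have /independentP indM := maximal_independent_indep maxM.
have := maximal_independent_meets_pair hpure k maxM.
case: (boolP (x k \in M)) => [Mxk _ | //]; apply/negP => Myk.
by move: (indM _ _ Mxk Myk); rewrite xy_edge.
Qed.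

Lemma pairing_transitive (e_sym : symmetric e) (e_irr : irreflexive e)
    (hpure : Ind_pure e) i j k :
  e (x i) (y j) -> e (x j) (y k) -> e (x i) (y k).
Proof.
move=> e_ij e_jk; apply/negPn/negP => n_ik.
have indS : independent e [set x i; y k].
  apply/independentP => u v; rewrite !inE.
  by case/orP=> /eqP-> /orP[]/eqP->; rewrite ?e_irr // e_sym.
have [M maxM sSM] := independent_extend indS.
have /independentP indM := maximal_independent_indep maxM.
have Mxi : x i \in M by rewrite (subsetP sSM) // !inE eqxx.
have Myk : y k \in M by rewrite (subsetP sSM) // !inE eqxx orbT.
case/orP: (maximal_independent_meets_pair hpure j maxM) => [Mxj | Myj].
- by move: (indM _ _ Mxj Myk); rewrite e_jk.
- by move: (indM _ _ Mxi Myj); rewrite e_ij.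
Qed.

Definition transversal (P : pred 'I_n) : {set T} :=
  [set x k | k in P] :|: [set y k | k in [predC P]].

Lemma x_notin_y_side (D : {pred 'I_n}) k : x k \notin [set y i | i in D].
Proof. by apply/negP => /imsetP[i _ /eqP]; rewrite (negbTE (xy_neq k i)). Qed.

Lemma y_notin_x_side (D : {pred 'I_n}) k : y k \notin [set x i | i in D].
Proof. by apply/negP => /imsetP[i _ /eqP]; rewrite eq_sym (negbTE (xy_neq i k)). Qed.

Lemma mem_transversal_x P k : (x k \in transversal P) = P k.
Proof. by rewrite in_setU (negbTE (x_notin_y_side _ k)) orbF mem_imset. Qed.

Lemma mem_transversal_y P k : (y k \in transversal P) = ~~ P k.
Proof. by rewrite in_setU (negbTE (y_notin_x_side _ k)) (mem_imset _ _ y_inj). Qed.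

Lemma transversal_maximal (e_sym : symmetric e) (P : pred 'I_n) :
  (forall k l, P k -> e (x k) (y l) -> P l) ->
  maximal_independent e (transversal P).
Proof.
move=> P_closed; apply: dominating_maximal_independent => [|v].
  apply/independentP => u v.
  have [[i ->]|[i ->]] := xy_cover u; have [[j ->]|[j ->]] := xy_cover v.
  - by move=> _ _; move/independentP: indX; apply; rewrite imset_f.
  - rewrite mem_transversal_x mem_transversal_y => Pi /negP Pj.
    by apply/negP => /(P_closed _ _ Pi).
  - rewrite mem_transversal_y mem_transversal_x e_sym => /negP Pi Pj.
    by apply/negP => /(P_closed _ _ Pj).
  - by move=> _ _; move/independentP: indY; apply; rewrite imset_f.
have [[i ->]|[i ->]] := xy_cover v.
- by rewrite mem_transversal_x => nPi; exists (y i); rewrite ?mem_transversal_y // e_sym.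
- by rewrite mem_transversal_y negbK => Pi; exists (x i); rewrite ?mem_transversal_x.
Qed.

Lemma crossed_pair_unseparated (hpure : Ind_pure e) i j M :
  e (x i) (y j) -> e (x j) (y i) -> maximal_independent e M ->
  (x i \in M) = (x j \in M).
Proof.
move=> e_ij e_ji maxM; have /independentP indM := maximal_independent_indep maxM.
have pairE k := maximal_independent_pairE hpure k maxM.
apply/idP/idP => Mx.
- have : y j \notin M by apply/negP => My; move: (indM _ _ Mx My); rewrite e_ij.
  by rewrite pairE negbK.
- have : y i \notin M by apply/negP => My; move: (indM _ _ Mx My); rewrite e_ji.
  by rewrite pairE negbK.
Qed.

Hypothesis xy_trans : forall i j k, i != j -> j != k -> i != k ->
  e (x i) (y j) -> e (x j) (y k) -> e (x i) (y k).

Definition upset c : pred 'I_n := fun k => (k == c) || e (x c) (y k).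

Lemma upset_closed c k l : upset c k -> e (x k) (y l) -> upset c l.
Proof.
rewrite /upset; case: (eqVneq k c) => [-> _ -> | ne_kc /= e_ck e_kl]; first exact: orbT.
case: (eqVneq l c) => //= ne_lc; case: (eqVneq k l) => [<- // | ne_kl].
by rewrite (xy_trans _ ne_kl _ e_ck e_kl) // eq_sym.
Qed.

Lemma cross_or_separated (e_sym : symmetric e) a b : a != b ->
  has_cross e x y \/ exists2 M, maximal_independent e M &
    (x a \in M) != (x b \in M) /\ (y a \in M) != (y b \in M).
Proof.
have sep c d : c != d -> ~~ e (x c) (y d) -> exists2 M, maximal_independent e M &
    (x c \in M) != (x d \in M) /\ (y c \in M) != (y d \in M).
  move=> ne_cd n_cd; exists (transversal (upset c)).
    exact/transversal_maximal/upset_closed.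
  rewrite !mem_transversal_x !mem_transversal_y /upset !eqxx.
  by rewrite (eq_sym d c) (negbTE ne_cd) (negbTE n_cd).
move=> ne_ab; case: (boolP (e (x a) (y b))) => [e_ab | n_ab]; last by right; apply: sep.
case: (boolP (e (x b) (y a))) => [e_ba | n_ba]; first by left; exists a, b.
right; have [|M maxM [ne_x ne_y]] := sep b a _ n_ba; first by rewrite eq_sym.
by exists M => //; rewrite eq_sym (eq_sym (y a \in M)).
Qed.

Lemma unseparated_cross (e_sym : symmetric e) u v : u != v ->
  (forall M, maximal_independent e M -> (u \in M) = (v \in M)) -> has_cross e x y.
Proof.
have maxX := transversal_maximal e_sym (P := predT) (fun _ _ _ _ => isT).
case: (xy_cover u) => [[a ->]|[a ->]]; case: (xy_cover v) => [[b ->]|[b ->]] => ne_uv unsep.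
- have /(cross_or_separated e_sym)[//|[M maxM [+ _]]] : a != b.
    by apply: contra ne_uv => /eqP->.
  by rewrite unsep ?eqxx.
- by move: (unsep _ maxX); rewrite mem_transversal_x mem_transversal_y.
- by move: (unsep _ maxX); rewrite mem_transversal_x mem_transversal_y.
- have /(cross_or_separated e_sym)[//|[M maxM [_]]] : a != b.
    by apply: contra ne_uv => /eqP->.
  by rewrite unsep ?eqxx.
Qed.

End Pairing.

Section Existence.
Variables (T : finType) (e : rel T).
Hypotheses (e_sym : symmetric e) (e_irr : irreflexive e).
Hypotheses (hiso : no_isolated_vertices e) (hpure : Ind_pure e).

Lemma bipartition_maximal A :
  independent e A -> independent e (~: A) -> maximal_independent e A.
Proof.
move=> indA indC.
apply: dominating_maximal_independent => // v Av.
have [u e_vu] := hiso v; exists u; last by rewrite e_sym.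
apply/negPn/negP => Au; move/independentP: indC => /(_ v u).
by rewrite !inE Av Au e_vu => /(_ isT isT).
Qed.

Variable A : {set T}.
Hypotheses (indA : independent e A) (indC : independent e (~: A)).

Let maxA : maximal_independent e A := bipartition_maximal indA indC.
Let maxC : maximal_independent e (~: A).
Proof. by apply: bipartition_maximal; rewrite ?setCK. Qed.

Lemma bipartition_card : #|A| = #|~: A|.
Proof. exact: hpure maxA maxC. Qed.

(* [S] together with the vertices of the other side outside its neighbourhood is
   independent, hence no larger than [A]. *)
Lemma bipartition_hall : hall_condition e A.
Proof.
move=> S sSA.
have sNC : nbhd e S \subset ~: A.
  apply/subsetP => v /nbhdP[u Su e_uv]; rewrite inE; apply/negP => Av.
  by move/independentP: indA => /(_ u v (subsetP sSA u Su) Av); rewrite e_uv.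
have indSN : independent e (S :|: (~: A :\: nbhd e S)).
  apply/independentP => u v; rewrite !in_setU !in_setD !in_setC.
  case/orP=> [Su | /andP[Nu Au]]; case/orP=> [Sv | /andP[Nv Av]].
  - by move/independentP: indA; apply; apply: (subsetP sSA).
  - by apply: contra Nv => e_uv; apply/nbhdP; exists u.
  - by apply: contra Nu => e_uv; apply/nbhdP; exists v; rewrite // e_sym.
  - by move/independentP: indC; apply; rewrite inE.
have disjSN : S :&: (~: A :\: nbhd e S) = set0.
  apply/setP => v; rewrite !inE; apply/negP => /and3P[Sv _].
  by rewrite (subsetP sSA v Sv).
have := independent_card_le hpure maxA indSN.
rewrite cardsU disjSN cards0 subn0 (cardsDS sNC) bipartition_card.
have leNC : #|nbhd e S| <= #|~: A| by apply: subset_leq_card.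
by rewrite -{2}(subnKC leNC) leq_add2r.
Qed.

Variable f : T -> T.
Hypothesis f_match : matching e A f.

Lemma matching_other_side a : a \in A -> f a \in ~: A.
Proof.
move=> Aa; rewrite inE; apply/negP => Afa.
by move/independentP: indA => /(_ a (f a) Aa Afa); rewrite f_match.2.
Qed.

Lemma matching_onto : f @: A = ~: A.
Proof.
apply/eqP; rewrite eqEcard card_in_imset; last exact: f_match.1.
rewrite bipartition_card leqnn andbT.
by apply/subsetP => _ /imsetP[a Aa ->]; apply: matching_other_side.
Qed.

Let x (i : 'I_#|A|) : T := enum_val i.
Let y (i : 'I_#|A|) : T := f (x i).

Lemma pure_order_of_matching : pure_order e x y.
Proof.
have Ax i : x i \in A := enum_valP i.
have x_inj : injective x := @enum_val_inj _ _.
have y_inj : injective y by move=> i j /(f_match.1 _ _ (Ax i) (Ax j)) /x_inj.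
have xy_neq i j : x i != y j.
  by apply/eqP => xy; move: (matching_other_side (Ax j)); rewrite -/(y j) -xy inE Ax.
have xy_cover v : (exists i, v = x i) \/ (exists i, v = y i).
  case: (boolP (v \in A)) => Av.
    by left; exists (enum_rank_in Av v); rewrite /x enum_rankK_in.
  have : v \in f @: A by rewrite matching_onto inE.
  by case/imsetP => a Aa ->; right; exists (enum_rank_in Aa a); rewrite /y /x enum_rankK_in.
have indX : independent e [set x i | i in 'I_#|A|].
  by apply: independentS indA; apply/subsetP => _ /imsetP[i _ ->].
have indY : independent e [set y i | i in 'I_#|A|].
  apply: independentS indC; apply/subsetP => _ /imsetP[i _ ->].
  exact: matching_other_side.
have xy_edge i : e (x i) (y i) by apply: f_match.2.
split; split=> // i j k _ _ _.
exact: (pairing_transitive x_inj xy_cover indX xy_edge e_sym e_irr hpure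
          (i := i) (j := j) (k := k)).
Qed.

End Existence.

Lemma pure_order_exists (T : finType) (e : rel T) :
  symmetric e -> irreflexive e -> bipartite e -> no_isolated_vertices e -> Ind_pure e ->
  exists n (x y : 'I_n -> T), pure_order e x y.
Proof.
move=> e_sym e_irr [A [indA indC]] hiso hpure.
have [f f_match] := hall_marriage (bipartition_hall e_sym hiso hpure indA indC).
by exists #|A|; do 2 eexists; exact: pure_order_of_matching f_match.
Qed.

Theorem lemma4p5 (T : finType) (e : rel T)
  (e_sym : symmetric e) (e_irr : irreflexive e)
  (hbip : bipartite e) (hiso : no_isolated_vertices e) (hpure : Ind_pure e) :
  (exists (n : nat) (x y : 'I_n -> T), pure_order e x y /\ has_cross e x y) <->
  (forall (n : nat) (x y : 'I_n -> T), pure_order e x y -> has_cross e x y).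
Proof.
split.
- move=> [n [x [y [[[x_inj _ _ xy_cover indX] [_ xy_edge _]] [i [j [ne_ij [e_ij e_ji]]]]]]]].
  move=> m x' y' [[x'_inj y'_inj x'y'_neq x'y'_cover indX'] [indY' x'y'_edge x'y'_trans]].
  apply: (unseparated_cross x'_inj y'_inj x'y'_neq x'y'_cover indX' indY' x'y'_edge
            x'y'_trans e_sym (u := x i) (v := x j)).
    by rewrite (inj_eq x_inj).
  by move=> M; exact: (crossed_pair_unseparated x_inj xy_cover indX xy_edge hpure e_ij e_ji).
- move=> every; have [n [x [y po]]] := pure_order_exists e_sym e_irr hbip hiso hpure.
  by exists n, x, y; split=> //; apply: every.
Qed.
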